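(* For every integer $T>0$ and real $\lambda>0$: (i) with $r=\sqrt{(T+1)n}$ and $n\ge r^2/\lambda^2$, $\mathsf{VC}\text{-}\mathsf{dim}\big(\mathbb{H}_{r,\lambda}(\mathcal{E}_{\mathsf{WLOA}}(n,d_T))\big)\in\Theta(r^2/\lambda^2)$; (ii) with $r=\sqrt{T/(T+1)}$ and $n\ge r^2/\lambda^2$, $\mathsf{VC}\text{-}\mathsf{dim}\big(\mathbb{H}_{1,\lambda}(\overline{\mathcal{E}}_{\mathsf{WLOA}}(n,d_T))\big)\in\Theta(1/\lambda^2)$.
   Context: $\mathcal{G}_n$ is the set of (unlabeled, simple, undirected) graphs on $n$ vertices. $1$-WL colouring: $C^1_0$ constant, $C^1_t(v)=\mathsf{RELABEL}(C^1_{t-1}(v),\{\!\{C^1_{t-1}(u):u\in N(v)\}\!\})$ with a fixed injective $\mathsf{RELABEL}$ shared by all graphs; $\Sigma_t$ is the set of colours at round $t$ over all of $\mathcal{G}_n$ and $\phi_t(G)_c$ is the number of vertices of $G$ with colour $c$ at round $t$. The Weisfeiler–Leman optimal assignment feature map $\phi^{(T)}_{\mathsf{WLOA}}(G)\in\{0,1\}^{d_T}$ has one coordinate for each triple $(t,c,j)$ with $t\in\{0,\dots,T\}$, $c\in\Sigma_t$, $j\in\{1,\dots,n\}$, equal to $1$ if $\phi_t(G)_c\ge j$ and $0$ otherwise (so $\langle\phi^{(T)}_{\mathsf{WLOA}}(G),\phi^{(T)}_{\mathsf{WLOA}}(H)\rangle=\sum_{t=0}^T\sum_{c\in\Sigma_t}\min(\phi_t(G)_c,\phi_t(H)_c)$).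 $\overline{\phi^{(T)}_{\mathsf{WLOA}}}$ is its normalisation to unit Euclidean norm; $\mathcal{E}_{\mathsf{WLOA}}(n,d_T)=\{\phi^{(T)}_{\mathsf{WLOA}}\}$, $\overline{\mathcal{E}}_{\mathsf{WLOA}}(n,d_T)=\{\overline{\phi^{(T)}_{\mathsf{WLOA}}}\}$. A sample $(\mathbf{x}_i,y_i)\subset\mathbb{R}^d\times\{0,1\}$ is $(r,\lambda)$-separable if the points lie in a ball of radius $r$ and the distance between the convex hulls of the two classes is at least $2\lambda$. $\mathbb{H}_{r,\lambda}(\mathcal{E})$ is the set of partial concepts $h:\mathcal{G}_n\to\{0,1,\star\}$ such that every finite list of graphs with $h\neq\star$, labelled by $h$ and embedded by some $\mathrm{emb}\in\mathcal{E}$, is $(r,\lambda)$-separable. VC dimension: largest size of a set shattered by the class (every $0/1$ pattern realised). *)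

From HB Require Import structures.
From mathcomp Require Import all_boot all_order all_algebra fingroup perm.
From mathcomp Require Import boolp reals.
Set Implicit Arguments. Unset Strict Implicit. Unset Printing Implicit Defensive.
Import Order.TTheory GRing.Theory Num.Theory.

Definition lgraph (n : nat) := {ffun 'I_n * 'I_n -> bool}.

Definition simple_graphb n (g : lgraph n) : bool :=
  [forall u, ~~ g (u, u)] && [forall u, forall v, g (u, v) == g (v, u)].

Definition sgraph (n : nat) := {g : lgraph n | simple_graphb g}.

Definition adj n (g : sgraph n) (u v : 'I_n) : bool := val g (u, v).

Definition isob n (g h : sgraph n) : bool :=
  [exists p : {perm 'I_n}, [forall u, forall v, adj g u v == adj h (p u) (p v)]].

Definition isoclass n (g : sgraph n) : {set sgraph n} := [set h | isob g h].

(* G_n : unlabelled graphs on n vertices = isomorphism classes *)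
Definition Gn (n : nat) := {A : {set sgraph n} | [exists g, A == isoclass g]}.

Definition rep n (G : Gn n) : sgraph n := xchoose (existsP (valP G)).

(* Vertices of all graphs: pairs (g, v).  wl_eq t x y holds iff x and y get the
   same 1-WL colour at round t (RELABEL injective: same previous colour and same
   multiset of neighbour colours). *)
Fixpoint wl_eq n (t : nat) (x y : sgraph n * 'I_n) {struct t} : bool :=
  match t with
  | 0 => true
  | t'.+1 =>
      wl_eq t' x y &&
      [forall z : sgraph n * 'I_n,
         #|[set u | adj x.1 x.2 u & wl_eq t' (x.1, u) z]|
         == #|[set u | adj y.1 y.2 u & wl_eq t' (y.1, u) z]|]
  end.

(* the colour of a vertex at round t, canonically represented by its colour class *)
Definition wlcol n (t : nat) (x : sgraph n * 'I_n) : {set sgraph n * 'I_n} :=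
  [set y | wl_eq t x y].

Definition Sigma n (t : nat) : {set {set sgraph n * 'I_n}} :=
  [set wlcol t x | x : sgraph n * 'I_n].

Definition wlcount n (t : nat) (g : sgraph n) (c : {set sgraph n * 'I_n}) : nat :=
  #|[set v | wlcol t (g, v) == c]|.

(* coordinates (t, c, j), t in {0..T}, c in Sigma_t, j in {1..n} (j = k.+1, k : 'I_n) *)
Definition wloa_index (n T : nat) :=
  {x : 'I_T.+1 * {set sgraph n * 'I_n} * 'I_n | x.1.2 \in Sigma n x.1.1}.

Definition phi_wloa (R : realType) (n T : nat) (G : Gn n) : wloa_index n T -> R :=
  fun i => let: (t, c, k) := val i in
           if (k.+1 <= wlcount t (rep G) c)%N then 1%R else 0%R.

Definition sqnorm (R : realType) (I : finType) (x : I -> R) : R :=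
  (\sum_(i : I) x i ^+ 2)%R.
Definition enorm (R : realType) (I : finType) (x : I -> R) : R := Num.sqrt (sqnorm x).
Definition edist (R : realType) (I : finType) (x y : I -> R) : R :=
  enorm (fun i => (x i - y i)%R).

Definition phi_wloa_norm (R : realType) (n T : nat) (G : Gn n) : wloa_index n T -> R :=
  fun i => (@phi_wloa R n T G i / enorm (@phi_wloa R n T G))%R.

Definition E_WLOA (R : realType) (n T : nat) : (Gn n -> wloa_index n T -> R) -> Prop :=
  fun emb => emb = @phi_wloa R n T.
Definition Ebar_WLOA (R : realType) (n T : nat) : (Gn n -> wloa_index n T -> R) -> Prop :=
  fun emb => emb = @phi_wloa_norm R n T.

Definition in_hull (R : realType) (I : finType) (xs : seq (I -> R)) (y : I -> R) : Prop :=
  exists w : 'I_(size xs) -> R,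
    (forall k, 0 <= w k)%R /\ (\sum_k w k = 1)%R /\
    forall i, y i = (\sum_k w k * (nth (fun _ => 0%R) xs k) i)%R.

Definition separable (R : realType) (I : finType) (r lam : R)
    (s : seq ((I -> R) * bool)) : Prop :=
  (exists c : I -> R, forall p, p \in s -> (edist p.1 c <= r)%R) /\
  forall y0 y1,
    in_hull [seq p.1 | p <- s & ~~ p.2] y0 ->
    in_hull [seq p.1 | p <- s & p.2] y1 ->
    (2 * lam <= edist y0 y1)%R.

(* H_{r,lambda}(E): partial concepts (None = star) *)
Definition Hclass (R : realType) (X I : finType) (E : (X -> I -> R) -> Prop)
    (r lam : R) (h : X -> option bool) : Prop :=
  forall s : seq X, (forall x, x \in s -> h x != None) ->
    exists emb, E emb /\ separable r lam [seq (emb x, odflt false (h x)) | x <- s].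

Definition shattered (X : finType) (C : (X -> option bool) -> Prop) (S : {set X}) : Prop :=
  forall f : X -> bool, exists h, C h /\ forall x, x \in S -> h x = Some (f x).

Definition VCdim (X : finType) (C : (X -> option bool) -> Prop) : nat :=
  \max_(S : {set X} | `[< shattered C S >]) #|S|.

From HB Require Import structures.
From mathcomp Require Import all_boot all_order all_algebra fingroup perm.
From mathcomp Require Import boolp reals.
From mathcomp Require Import zify ring lra.
Import Order.TTheory GRing.Theory Num.Theory.
Set Implicit Arguments. Unset Strict Implicit. Unset Printing Implicit Defensive.

(* If 2k points of a shattered set are split into k pairs with
   differences d_j, then |d_j| <= 2r since all points lie in a ball of radius r,
   and greedily chosen signs give |sum_j +-d_j|^2 <= 4 k r^2.  Labelling each pair
   according to its sign, the two class means differ by (1/k) sum_j +-d_j, so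
   separability forces 2 lam <= 2 r / sqrt k, i.e. k <= r^2 / lam^2.

   The circulant graph C_a on n vertices (u ~ v iff the cyclic
   distance of u and v is at most a) is vertex-transitive, so 1-WL gives all its
   vertices a single colour at every round; its degree 2a is seen at round 1, so
   for a + b < n the graphs C_a and C_b share no colour at any round t >= 1.
   Hence phi(C_a) = s + e_a with a common round-0 part s and pairwise orthogonal
   e_a of squared norm T n.  For any labelling of C_0, ..., C_(M-1), the
   functional u = sum_a +-e_a equals +-T n on the two classes while
   |u|^2 = M T n, so the classes are separated by 2 sqrt(T n / M), which is at
   least 2 lam when M is about r^2 / (2 lam^2). *)

Section WLColours.
Variable n : nat.
Implicit Types x y z : sgraph n * 'I_n.

Lemma wl_eq_refl t x : wl_eq t x x.
Proof. by elim: t => [|t IH] //=; rewrite IH; apply/forallP. Qed.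

Lemma wl_eq_sym t x y : wl_eq t x y = wl_eq t y x.
Proof.
elim: t => [|t IH] //=; rewrite IH; congr andb.
by apply: eq_forallb => z; rewrite eq_sym.
Qed.

Lemma wl_eq_trans t x y z : wl_eq t x y -> wl_eq t y z -> wl_eq t x z.
Proof.
elim: t x y z => [|t IH] x y z //= /andP[xy /forallP cxy] /andP[yz /forallP cyz].
rewrite (IH _ _ _ xy yz); apply/forallP => w.
by rewrite (eqP (cxy w)) (cyz w).
Qed.

Lemma wl_eq_le s t x y : (s <= t)%N -> wl_eq t x y -> wl_eq s x y.
Proof.
elim: t => [|t IH]; first by rewrite leqn0 => /eqP ->.
by rewrite leq_eqVlt ltnS => /orP[/eqP -> // | le_st /andP[/(IH le_st)]].
Qed.

Lemma eq_wlcol t x y : wl_eq t x y -> wlcol t x = wlcol t y.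
Proof.
move=> xy; apply/setP => w; rewrite !inE; apply/idP/idP; last exact: wl_eq_trans.
by apply: wl_eq_trans; rewrite wl_eq_sym.
Qed.

Lemma wl_eq_perm (g h : sgraph n) (p : {perm 'I_n}) :
  (forall u v, adj g u v = adj h (p u) (p v)) ->
  forall t v, wl_eq t (g, v) (h, p v).
Proof.
move=> gh; elim=> [|t IH] v //=; rewrite IH /=; apply/forallP => z.
set B := [set u | adj h (p v) u & wl_eq t (h, u) z].
have -> : [set u | adj g v u & wl_eq t (g, u) z] = p @^-1: B.
  apply/setP => u; rewrite !inE -gh; congr andb.
  apply/idP/idP; last exact: wl_eq_trans (IH u).
  by apply: wl_eq_trans; rewrite wl_eq_sym.
by rewrite card_preimset //; apply: perm_inj.
Qed.

Lemma wl_eq1_card_adj x y : wl_eq 1 x y ->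
  #|[set u | adj x.1 x.2 u]| = #|[set u | adj y.1 y.2 u]|.
Proof.
case/andP => _ /forallP /(_ x) /eqP.
have andbT_set w : [set u | adj w.1 w.2 u & true] = [set u | adj w.1 w.2 u].
  by apply/setP => u; rewrite !inE andbT.
by rewrite !andbT_set.
Qed.

End WLColours.

Lemma isob_refl n (g : sgraph n) : isob g g.
Proof. by apply/existsP; exists 1%g; apply/forallP => u; apply/forallP => v; rewrite !perm1. Qed.

Lemma rep_iso n (G : Gn n) (g : sgraph n) : val G = isoclass g ->
  exists p : {perm 'I_n}, forall u v, adj (rep G) u v = adj g (p u) (p v).
Proof.
move=> Gg; have /eqP repG := xchooseP (existsP (valP G)).
have : g \in isoclass (rep G) by rewrite -repG Gg inE isob_refl.
rewrite inE => /existsP[p /forallP gp]; exists p => u v.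
by apply/eqP; have /forallP := gp u; apply.
Qed.

Definition natdist (i j : nat) := (i - j + (j - i))%N.

(* [u] and [v] are adjacent iff their cyclic distance [min(|u - v|, n - |u - v|)]
   is between 1 and [a]. *)
Definition circulant_adj n (a : nat) (u v : 'I_n) : bool :=
  (nat_of_ord u != v) && ((natdist u v <= a) || (n - natdist u v <= a))%N.

Lemma circulant_simple n a :
  simple_graphb [ffun p : 'I_n * 'I_n => circulant_adj a p.1 p.2].
Proof.
apply/andP; split.
  by apply/forallP => u; rewrite ffunE /circulant_adj eqxx.
apply/forallP => u; apply/forallP => v; rewrite !ffunE /circulant_adj /natdist /=.
by apply/eqP; congr andb; [rewrite eq_sym | rewrite addnC].
Qed.

Definition circulant n a : sgraph n :=
  exist _ [ffun p : 'I_n * 'I_n => circulant_adj a p.1 p.2] (circulant_simple n a).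

Lemma adj_circulant n a u v : adj (circulant n a) u v = circulant_adj a u v.
Proof. by rewrite /adj /= ffunE. Qed.

Definition rot n : {perm 'I_n} := perm (@ordS_inj n).

Lemma rotE n (u : 'I_n) : val (rot n u) = if (u.+1 < n)%N then u.+1 else 0%N.
Proof.
rewrite permE /=; case: ifP => lt_u1n; first by rewrite modn_small.
have -> : u.+1 = n by apply/eqP; rewrite eqn_leq ltn_ord leqNgt lt_u1n.
by rewrite modnn.
Qed.

Lemma circulant_rot_aut n a u v :
  adj (circulant n a) u v = adj (circulant n a) (rot n u) (rot n v).
Proof.
rewrite !adj_circulant /circulant_adj !rotE /natdist.
by have := ltn_ord u; have := ltn_ord v; case: ifP; case: ifP => *; lia.
Qed.

Lemma val_iter_rot n j : (j < n.+1)%N -> val (iter j (rot n.+1) ord0) = j.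
Proof. by elim: j => [|j IH] //= ltjn; rewrite rotE IH ?(ltnW ltjn) // ltjn. Qed.

Lemma circulant_wl_eq n a t (v : 'I_n.+1) :
  wl_eq t (circulant n.+1 a, ord0) (circulant n.+1 a, v).
Proof.
have iter_eq j : wl_eq t (circulant n.+1 a, ord0) (circulant n.+1 a, iter j (rot n.+1) ord0).
  elim: j => [|j IH]; first exact: wl_eq_refl.
  by apply: wl_eq_trans IH _; apply: wl_eq_perm; apply: circulant_rot_aut.
by have -> : v = iter v (rot n.+1) ord0 by apply/val_inj; rewrite val_iter_rot.
Qed.

Lemma circulant_card_adj_lt n a b : (a < b)%N -> (a + b < n.+1)%N ->
  (#|[set u | adj (circulant n.+1 a) ord0 u]|
     < #|[set u | adj (circulant n.+1 b) ord0 u]|)%N.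
Proof.
move=> lt_ab ab_lt; apply: proper_card; apply/properP; split.
  by apply/subsetP => u; rewrite !inE !adj_circulant /circulant_adj /natdist /= => *; lia.
have lt_bn : (b < n.+1)%N by lia.
by exists (Ordinal lt_bn); rewrite !inE !adj_circulant /circulant_adj /natdist /=; lia.
Qed.

Section CirculantColours.
Variable n : nat.

Lemma isoclass_circulant_subproof a :
  [exists g, isoclass (circulant n.+1 a) == isoclass g].
Proof. by apply/existsP; exists (circulant n.+1 a). Qed.

Definition circG a : Gn n.+1 :=
  exist _ (isoclass (circulant n.+1 a)) (isoclass_circulant_subproof a).

Definition circ_colour a t : {set sgraph n.+1 * 'I_n.+1} :=
  wlcol t (circulant n.+1 a, ord0).

Lemma wlcount_circG a t c :
  wlcount t (rep (circG a)) c = if c == circ_colour a t then n.+1 else 0%N.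
Proof.
have [p repp] := @rep_iso _ (circG a) (circulant n.+1 a) erefl.
have colour v : wlcol t (rep (circG a), v) = circ_colour a t.
  rewrite (eq_wlcol (wl_eq_perm repp t v)); apply/esym/eq_wlcol.
  exact: circulant_wl_eq.
rewrite /wlcount; under eq_finset do rewrite colour.
case: (eqVneq c (circ_colour a t)) => _ /=.
  by rewrite -[RHS]card_ord -cardsT; apply: eq_card => v; rewrite !inE.
by rewrite -(cards0 'I_n.+1); apply: eq_card => v; rewrite !inE.
Qed.

Lemma circ_colour_Sigma a t : circ_colour a t \in Sigma n.+1 t.
Proof. by apply/imsetP; exists (circulant n.+1 a, ord0). Qed.

Lemma Sigma0_circ_colour a c : c \in Sigma n.+1 0 -> c = circ_colour a 0.
Proof. by case/imsetP => x _ ->; rewrite /circ_colour; apply/setP => y; rewrite !inE. Qed.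

Lemma circ_colour_neq a b t : a != b -> (a + b < n.+1)%N -> (0 < t)%N ->
  circ_colour a t != circ_colour b t.
Proof.
wlog lt_ab : a b / (a < b)%N.
  move=> lt_neq neq_ab ab_lt t_gt0; have [lt_ab|lt_ba|eq_ab] := ltngtP a b.
  - exact: lt_neq.
  - have ba_lt : (b + a < n.+1)%N by rewrite addnC.
    by rewrite eq_sym lt_neq // eq_sym.
  - by rewrite eq_ab eqxx in neq_ab.
move=> _ ab_lt t_gt0; apply/eqP => ab_colour.
have : (circulant n.+1 b, ord0) \in circ_colour a t by rewrite ab_colour inE wl_eq_refl.
rewrite inE => /(wl_eq_le t_gt0) /wl_eq1_card_adj /= card_ab.
by have := circulant_card_adj_lt lt_ab ab_lt; rewrite card_ab ltnn.
Qed.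

Lemma circG_inj a b : (a + b < n.+1)%N -> circG a = circG b -> a = b.
Proof.
move=> ab_lt ab; apply/eqP; apply: contraT => neq_ab.
have := wlcount_circG b 1 (circ_colour a 1).
by rewrite -ab wlcount_circG eqxx (negPf (circ_colour_neq neq_ab ab_lt (ltn0Sn 0))).
Qed.

End CirculantColours.

Local Open Scope ring_scope.

Definition sgnb (R : pzRingType) (b : bool) : R := if b then 1 else -1.
Arguments sgnb {R} b.

Lemma sgnb_sqr (R : pzRingType) (b : bool) : sgnb b ^+ 2 = 1 :> R.
Proof. by case: b; rewrite /sgnb ?sqrrN expr1n. Qed.

Lemma sum_nat_pairs (V : nmodType) (G : nat -> V) k :
  \sum_(0 <= j < k.*2) G j = \sum_(0 <= j < k) (G j.*2 + G j.*2.+1).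
Proof.
elim: k => [|k IH]; first by rewrite !big_geq.
by rewrite doubleS !big_nat_recr //= ?IH ?addrA // -addnn leq_addl.
Qed.

Section Euclid.
Variables (R : realType) (I : finType).
Implicit Types x y z u : I -> R.

Definition dot x y : R := \sum_i x i * y i.

Lemma sqnormE x : sqnorm x = dot x x.
Proof. by apply: eq_bigr => i _; rewrite expr2. Qed.

Lemma sqnorm_ge0 x : 0 <= sqnorm x.
Proof. by apply: sumr_ge0 => i _; rewrite sqr_ge0. Qed.

Lemma sqnormZ c x : sqnorm (fun i => c * x i) = c ^+ 2 * sqnorm x.
Proof. by rewrite /sqnorm mulr_sumr; apply: eq_bigr => i _; ring. Qed.

Lemma sqnormD x y :
  sqnorm (fun i => x i + y i) = sqnorm x + 2 * dot x y + sqnorm y.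
Proof.
by rewrite /sqnorm /dot mulr_sumr -!big_split /=; apply: eq_bigr => i _; ring.
Qed.

Lemma dotC x y : dot x y = dot y x.
Proof. by apply: eq_bigr => i _; rewrite mulrC. Qed.

Lemma dotDr u x y : dot u (fun i => x i + y i) = dot u x + dot u y.
Proof. by rewrite /dot -big_split; apply: eq_bigr => i _; rewrite mulrDr. Qed.

Lemma dotBr u x y : dot u (fun i => x i - y i) = dot u x - dot u y.
Proof. by rewrite /dot -sumrB; apply: eq_bigr => i _; rewrite mulrBr. Qed.

Lemma dotZl c x y : dot (fun i => c * x i) y = c * dot x y.
Proof. by rewrite /dot mulr_sumr; apply: eq_bigr => i _; rewrite mulrA. Qed.

Lemma dotZr c x y : dot x (fun i => c * y i) = c * dot x y.
Proof. by rewrite dotC dotZl dotC. Qed.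

Lemma dot_suml (J : finType) (c : J -> R) (e : J -> I -> R) x :
  dot (fun i => \sum_j c j * e j i) x = \sum_j c j * dot (e j) x.
Proof.
rewrite /dot (eq_bigr (fun i => \sum_j c j * (e j i * x i))); last first.
  by move=> i _; rewrite mulr_suml; apply: eq_bigr => j _; rewrite mulrA.
by rewrite exchange_big; apply: eq_bigr => j _; rewrite mulr_sumr.
Qed.

Lemma edist_ge0 x y : 0 <= edist x y.
Proof. exact: sqrtr_ge0. Qed.

Lemma edist_sqr x y : edist x y ^+ 2 = sqnorm (fun i => x i - y i).
Proof. by rewrite sqr_sqrtr // sqnorm_ge0. Qed.

Lemma edist0r x : edist x (fun=> 0) = enorm x.
Proof. by rewrite /edist /enorm /sqnorm; under eq_bigr do rewrite subr0. Qed.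

Lemma enorm_normalize x : enorm x != 0 -> enorm (fun i => x i / enorm x) = 1.
Proof.
move=> nx0; set e := enorm x.
have e2 : e ^+ 2 = sqnorm x by rewrite /e sqr_sqrtr // sqnorm_ge0.
rewrite /enorm (_ : (fun i => x i / e) = fun i => e^-1 * x i); last first.
  by apply: funext => i; rewrite mulrC.
by rewrite sqnormZ -e2 -exprMn mulVf // expr1n sqrtr1.
Qed.

Lemma sqnorm_sub_le_diameter (a b c : I -> R) (r : R) :
  sqnorm (fun i => a i - c i) <= r ^+ 2 -> sqnorm (fun i => b i - c i) <= r ^+ 2 ->
  sqnorm (fun i => a i - b i) <= 4 * r ^+ 2.
Proof.
have : sqnorm (fun i => a i - b i) + sqnorm (fun i => a i + b i - 2 * c i)
    = 2 * sqnorm (fun i => a i - c i) + 2 * sqnorm (fun i => b i - c i).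
  by rewrite /sqnorm !mulr_sumr -!big_split /=; apply: eq_bigr => i _; ring.
have := sqnorm_ge0 (fun i => a i + b i - 2 * c i); lra.
Qed.

Lemma dot_sqr_le u z : 0 < dot u u -> dot u z ^+ 2 / dot u u <= sqnorm z.
Proof.
move=> uu_gt0; set a := dot u z / dot u u.
have expand : sqnorm (fun i => z i - a * u i)
    = sqnorm z - 2 * a * dot u z + a ^+ 2 * dot u u.
  rewrite !sqnormE /dot (eq_bigr (fun i => z i * z i - (2 * a) * (u i * z i)
                                          + a ^+ 2 * (u i * u i))).
    by rewrite big_split /= sumrB -!mulr_sumr.
  by move=> i _; ring.
have : 2 * a * dot u z - a ^+ 2 * dot u u = dot u z ^+ 2 / dot u u.
  by rewrite /a; field; rewrite gt_eqF.
have := sqnorm_ge0 (fun i => z i - a * u i); rewrite expand; lra.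
Qed.

Lemma in_hull_map_dot (X : eqType) (P : X -> I -> R) (l : seq X) u (v : R) y :
  (forall a, a \in l -> dot u (P a) = v) -> in_hull [seq P a | a <- l] y -> dot u y = v.
Proof.
case: l => [|a0 l] dot_l [w [_ [w_sum1 y_def]]].
  by move: w_sum1; rewrite big_ord0 => /eqP; rewrite eq_sym oner_eq0.
pose Q := [seq P a | a <- a0 :: l].
rewrite /dot (eq_bigr (fun i => \sum_k u i * (w k * nth (fun=> 0) Q k i)));
  last by move=> i _; rewrite y_def mulr_sumr.
rewrite exchange_big -[v]mul1r -w_sum1 mulr_suml; apply: eq_bigr => k _.
have ltkl : (k < size (a0 :: l))%N by rewrite -(size_map P) ltn_ord.
rewrite (nth_map a0) // -(dot_l (nth a0 (a0 :: l) k)) ?mem_nth // /dot mulr_sumr.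
by apply: eq_bigr => i _; ring.
Qed.

Lemma in_hull_mean (A : Type) (P : A -> I -> R) (l : seq A) (p : pred A) :
  (0 < count p l)%N ->
  in_hull [seq P a | a <- l & p a]
          (fun i => (count p l)%:R^-1 * \sum_(a <- l | p a) P a i).
Proof.
rewrite -size_filter.
have -> : (fun i => (size [seq a <- l | p a])%:R^-1 * \sum_(a <- l | p a) P a i)
    = (fun i => (size [seq a <- l | p a])%:R^-1 * \sum_(a <- [seq a <- l | p a]) P a i).
  by apply: funext => i; rewrite big_filter.
case: [seq a <- l | p a] => [|a0 l'] // _.
exists (fun=> (size (a0 :: l'))%:R^-1); split; first by move=> _; rewrite invr_ge0 ler0n.
split.
  rewrite sumr_const card_ord size_map -(mulr_natr (size (a0 :: l'))%:R^-1).
  by rewrite mulVf // pnatr_eq0.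
move=> i; rewrite -mulr_sumr; congr (_ * _).
rewrite (big_nth a0) big_mkord size_map; apply: eq_bigr => k _.
by rewrite (nth_map a0).
Qed.

Lemma exists_balanced_signs (d : nat -> I -> R) (k : nat) (D : R) :
  (forall j, (j < k)%N -> sqnorm (d j) <= D) ->
  exists eps : nat -> bool,
    sqnorm (fun i => \sum_(0 <= j < k) sgnb (eps j) * d j i) <= k%:R * D.
Proof.
elim: k => [|k IH] d_le.
  by exists xpredT; rewrite mul0r /sqnorm big1 // => i _; rewrite big_geq // expr0n.
have [eps eps_le] := IH (fun j ltjk => d_le j (leqW ltjk)).
set S := fun i => \sum_(0 <= j < k) sgnb (eps j) * d j i.
(* the sign of [d k] is chosen so that the cross term [2 <S, +-d k>] is nonpositive *)
set b := dot S (d k) <= 0.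
exists (fun j => if j == k then b else eps j).
have -> : (fun i => \sum_(0 <= j < k.+1) sgnb (if j == k then b else eps j) * d j i)
    = (fun i => S i + sgnb b * d k i).
  apply: funext => i; rewrite big_nat_recr //= eqxx; congr (_ + _).
  by apply: eq_big_nat => j /andP[_ ltjk]; rewrite (ltn_eqF ltjk).
rewrite sqnormD sqnormZ dotZr sgnb_sqr mul1r -natr1 mulrDl mul1r.
have : sgnb b * dot S (d k) <= 0.
  by rewrite /b /sgnb; case: ifPn => [|]; [rewrite mul1r | rewrite -ltNge => ?; lra].
have := d_le k (ltnSn k); lra.
Qed.

End Euclid.

Section AlternatingPairs.
Variables (A : Type) (x0 : A) (s : seq A) (k : nat) (f : A -> bool).
Hypothesis size_s : size s = k.*2.
Hypothesis f_pair : forall j, (j < k)%N -> f (nth x0 s j.*2.+1) = ~~ f (nth x0 s j.*2).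

Lemma sum_alternating (R : numDomainType) (F : A -> R) :
  \sum_(x <- s | f x) F x - \sum_(x <- s | ~~ f x) F x
  = \sum_(0 <= j < k) sgnb (f (nth x0 s j.*2)) * (F (nth x0 s j.*2) - F (nth x0 s j.*2.+1)).
Proof.
rewrite big_mkcond [in X in _ - X]big_mkcond -sumrB (big_nth x0) size_s sum_nat_pairs.
apply: eq_big_nat => j /andP[_ ltjk]; rewrite f_pair //.
by case: (f _); rewrite /sgnb /=; ring.
Qed.

Lemma count_alternating : count f s = k.
Proof.
have count_sum (p : pred A) : (count p s)%:R = \sum_(x <- s | p x) (1 : int).
  by rewrite -sum1_count natr_sum.
have := sum_alternating (fun=> 1 : int).
rewrite (eq_big_nat _ _ (F2 := fun=> 0)) => [|j _]; last by rewrite subrr mulr0.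
rewrite big1_eq -count_sum -(count_sum (predC f)) => /eqP.
rewrite subr_eq0 eqr_nat => /eqP count_fC.
by have := count_predC f s; rewrite size_s -count_fC addnn => /double_inj.
Qed.

End AlternatingPairs.

Section ShatteredBound.
Variables (R : realType) (X I : finType) (P : X -> I -> R).

Lemma separable_class_sum_gap (s : seq X) (f : X -> bool) (k : nat) (r lam : R) :
  0 <= lam -> (0 < k)%N -> count f s = k -> count (predC f) s = k ->
  separable r lam [seq (P x, f x) | x <- s] ->
  (2 * lam * k%:R) ^+ 2
    <= sqnorm (fun i => \sum_(x <- s | f x) P x i - \sum_(x <- s | ~~ f x) P x i).
Proof.
move=> lam_ge0 k_gt0 count_f count_fC [_ sep].
have count_nf : count (fun x => ~~ f x) s = k by [].
pose Spos i := \sum_(x <- s | f x) P x i.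
pose Sneg i := \sum_(x <- s | ~~ f x) P x i.
have sep_means : 2 * lam <= edist (fun i => k%:R^-1 * Sneg i) (fun i => k%:R^-1 * Spos i).
  rewrite -[in X in edist X _]count_nf -[in X in edist _ X]count_f; apply: sep.
    by rewrite filter_map -map_comp; apply: in_hull_mean; rewrite count_nf.
  by rewrite filter_map -map_comp; apply: in_hull_mean; rewrite count_f.
have gap : (2 * lam) ^+ 2 <= sqnorm (fun i => k%:R^-1 * Sneg i - k%:R^-1 * Spos i).
  rewrite -edist_sqr.
  by have := edist_ge0 (fun i => k%:R^-1 * Sneg i) (fun i => k%:R^-1 * Spos i); nra.
rewrite (_ : (fun i => _) = fun i => - k%:R^-1 * (Spos i - Sneg i)) in gap; last first.
  by apply: funext => i; ring.
rewrite sqnormZ sqrrN exprVn in gap.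
by rewrite exprMn -ler_pdivlMr ?exprn_gt0 ?ltr0n // [X in _ <= X]mulrC.
Qed.

Section Shattered.
Variables (S : {set X}) (r lam : R).
Hypothesis lam_gt0 : 0 < lam.
Hypothesis sepS : forall (f : X -> bool) (s : seq X), {subset s <= S} ->
  separable r lam [seq (P x, f x) | x <- s].

Lemma shattered_sqnorm_sub_le x y : x \in S -> y \in S ->
  sqnorm (fun i => P x i - P y i) <= 4 * r ^+ 2.
Proof.
move=> Sx Sy; have xyS : {subset [:: x; y] <= S}.
  by move=> z; rewrite mem_seq2 => /orP[] /eqP ->.
have [[c ball] _] := sepS (fun=> false) xyS.
have in_ball z : z \in [:: x; y] -> sqnorm (fun i => P z i - c i) <= r ^+ 2.
  move=> xyz; rewrite -edist_sqr; have := edist_ge0 (P z) c.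
  by have := ball (P z, false) (map_f (fun z => (P z, false)) xyz); nra.
by apply: (sqnorm_sub_le_diameter (c := c)); apply: in_ball; rewrite mem_seq2 eqxx ?orbT.
Qed.

Lemma shattered_half_card_le : (#|S|./2)%:R * lam ^+ 2 <= r ^+ 2.
Proof.
set k := #|S|./2.
have [->|k_gt0] := posnP k; first by rewrite mul0r sqr_ge0.
have [x0 _] : exists x0, x0 \in S.
  by apply/set0Pn; rewrite -card_gt0; move: k_gt0; rewrite /k; case: #|S|.
set s := take k.*2 (enum S).
have size_s : size s = k.*2 by rewrite size_takel // -cardE /k halfK leq_subr.
have sS : {subset s <= S} by move=> x /mem_take; rewrite mem_enum.
pose d j i := P (nth x0 s j.*2) i - P (nth x0 s j.*2.+1) i.
have d_le j : (j < k)%N -> sqnorm (d j) <= 4 * r ^+ 2.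
  move=> ltjk; apply: shattered_sqnorm_sub_le; apply/sS/mem_nth.
    by rewrite size_s ltn_double.
  by rewrite size_s -!muln2; lia.
have [eps eps_le] := exists_balanced_signs d_le.
(* the j-th pair is split between the classes, its first point labelled [eps j] *)
pose f x := odd (index x s) (+) eps (index x s)./2.
have uniq_s : uniq s by rewrite take_uniq ?enum_uniq.
have f_even j : (j < k)%N -> f (nth x0 s j.*2) = eps j.
  by move=> ltjk; rewrite /f index_uniq ?size_s ?ltn_double // odd_double half_double.
have f_pair j : (j < k)%N -> f (nth x0 s j.*2.+1) = ~~ f (nth x0 s j.*2).
  move=> ltjk; rewrite f_even // /f index_uniq ?size_s //; last by rewrite -!muln2; lia.
  by rewrite /= odd_double uphalf_double.
have count_f := count_alternating size_s f_pair.
have count_fC : count (predC f) s = k.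
  by apply/eqP; rewrite -(eqn_add2l k) -{1}count_f count_predC size_s addnn.
have := separable_class_sum_gap (ltW lam_gt0) k_gt0 count_f count_fC (sepS f sS).
rewrite (_ : (fun i => _) = fun i => \sum_(0 <= j < k) sgnb (eps j) * d j i); last first.
  apply: funext => i; rewrite (sum_alternating size_s f_pair (fun x => P x i)).
  by apply: eq_big_nat => j /andP[_ ltjk]; rewrite f_even.
move/le_trans/(_ eps_le); have : (0 : R) < k%:R by rewrite ltr0n.
nra.
Qed.

End Shattered.

Lemma VCdim_single_embedding_le (E : (X -> I -> R) -> Prop) (r lam : R) :
  (forall emb, E emb -> emb = P) -> 0 < lam ->
  (VCdim (Hclass E r lam))%:R <= 2 * (r ^+ 2 / lam ^+ 2) + 1.
Proof.
move=> E_P lam_gt0.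
have q_ge0 : 0 <= r ^+ 2 / lam ^+ 2 by rewrite divr_ge0 ?sqr_ge0.
rewrite /VCdim; apply: (big_ind (fun v : nat => v%:R <= 2 * (r ^+ 2 / lam ^+ 2) + 1)).
- by rewrite /=; lra.
- by move=> x y; rewrite /maxn; case: ifP.
move=> S /asboolP shS.
have sepS (f : X -> bool) (s : seq X) : {subset s <= S} ->
    separable r lam [seq (P x, f x) | x <- s].
  move=> sS; have [h [Hh hS]] := shS f.
  have h_def x : x \in s -> h x != None by move=> sx; rewrite hS ?sS.
  have [emb [/E_P -> sep]] := Hh s h_def.
  suff -> : [seq (P x, f x) | x <- s] = [seq (P x, odflt false (h x)) | x <- s] by [].
  by apply/eq_in_map => x sx; rewrite hS ?sS.
have half_le : (#|S|./2)%:R <= r ^+ 2 / lam ^+ 2.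
  by rewrite ler_pdivlMr ?exprn_gt0 //; apply: shattered_half_card_le.
rewrite -{1}(odd_double_half #|S|) natrD -muln2 natrM.
have : ((odd #|S|)%:R : R) <= 1 by case: (odd #|S|); rewrite ?ler01 ?lexx.
lra.
Qed.

End ShatteredBound.

Section OrthogonalShattering.
Variables (R : realType) (X I : finType) (E : (X -> I -> R) -> Prop) (emb : X -> I -> R).
Variables (M : nat) (G : 'I_M -> X) (s : I -> R) (e : 'I_M -> I -> R) (N r lam : R).
Hypothesis E_emb : E emb.
Hypothesis G_inj : injective G.
Hypothesis embG : forall a i, emb (G a) i = s i + e a i.
Hypothesis dot_e : forall a b, dot (e a) (e b) = if a == b then N else 0.
Hypothesis dot_e_s : forall a, dot (e a) s = 0.
Hypothesis enorm_embG : forall a, enorm (emb (G a)) <= r.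
Hypothesis M_gt0 : (0 < M)%N.
Hypothesis N_gt0 : 0 < N.
Hypothesis margin : M%:R * lam ^+ 2 <= N.

Lemma dot_signed_sum_embG (sg : 'I_M -> bool) a :
  dot (fun i => \sum_b sgnb (sg b) * e b i) (emb (G a)) = sgnb (sg a) * N.
Proof.
have -> : emb (G a) = (fun i => s i + e a i) := funext (embG a).
rewrite dot_suml (bigD1 a) //= dotDr dot_e_s dot_e eqxx add0r big1 ?addr0 //.
move=> b /negPf neq_ba.
by rewrite dotDr dot_e_s dot_e neq_ba addr0 mulr0.
Qed.

Lemma sqnorm_signed_sum (sg : 'I_M -> bool) :
  dot (fun i => \sum_b sgnb (sg b) * e b i) (fun i => \sum_b sgnb (sg b) * e b i)
  = M%:R * N.
Proof.
rewrite dot_suml (eq_bigr (fun=> N)) ?sumr_const ?card_ord ?mulr_natl // => b _.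
rewrite dotC dot_suml (bigD1 b) //= dot_e eqxx big1 ?addr0.
  by rewrite mulrA -expr2 sgnb_sqr mul1r.
by move=> a /negPf neq_ab; rewrite dot_e neq_ab mulr0.
Qed.

Lemma orthogonal_separable (f : X -> bool) (l : seq X) :
  {subset l <= [set G a | a : 'I_M]} -> separable r lam [seq (emb x, f x) | x <- l].
Proof.
move=> lG; split.
  exists (fun=> 0) => _ /mapP[x /lG /imsetP[a _ ->] ->].
  by rewrite edist0r; apply: enorm_embG.
move=> y0 y1; rewrite !filter_map -!map_comp => hull0 hull1.
pose u i := \sum_a sgnb (f (G a)) * e a i.
have dot_u x : x \in l -> dot u (emb x) = sgnb (f x) * N.
  by move=> /lG /imsetP[a _ ->]; apply: (dot_signed_sum_embG (fun a => f (G a))).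
have dot_u_y1 : dot u y1 = N.
  apply: in_hull_map_dot hull1 => x; rewrite mem_filter /= => /andP[fx /dot_u ->].
  by rewrite fx mul1r.
have dot_u_y0 : dot u y0 = - N.
  apply: in_hull_map_dot hull0 => x; rewrite mem_filter /= => /andP[/negPf fx /dot_u ->].
  by rewrite fx mulN1r.
have dot_uu : dot u u = M%:R * N := sqnorm_signed_sum (fun a => f (G a)).
have uu_gt0 : 0 < dot u u by rewrite dot_uu mulr_gt0 // ltr0n.
have := dot_sqr_le (fun i => y0 i - y1 i) uu_gt0.
rewrite dot_uu dotBr dot_u_y0 dot_u_y1 -edist_sqr => gap.
have marginN : M%:R * lam ^+ 2 * N <= N * N by rewrite ler_wpM2r // ltW.
have : 4 * lam ^+ 2 <= (- N - N) ^+ 2 / (M%:R * N).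
  by rewrite ler_pdivlMr ?mulr_gt0 ?ltr0n //; nra.
have := edist_ge0 y0 y1; nra.
Qed.

Lemma orthogonal_shattered : shattered (Hclass E r lam) [set G a | a : 'I_M].
Proof.
move=> f; pose h x := if x \in [set G a | a : 'I_M] then Some (f x) else None.
exists h; split => [l l_def|x xG]; last by rewrite /h xG.
have lG : {subset l <= [set G a | a : 'I_M]}.
  by move=> x /l_def; rewrite /h; case: ifP.
exists emb; split => //.
suff -> : [seq (emb x, odflt false (h x)) | x <- l] = [seq (emb x, f x) | x <- l].
  exact: orthogonal_separable.
by apply/eq_in_map => x /lG xG; rewrite /h xG.
Qed.

Lemma orthogonal_VCdim_ge : (M <= VCdim (Hclass E r lam))%N.
Proof.
rewrite -{1}(card_ord M) -(card_imset _ G_inj).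
apply: (@leq_bigmax_cond _ (fun S => `[< shattered (Hclass E r lam) S >]) (fun S => #|S|)).
by apply/asboolP; exact: orthogonal_shattered.
Qed.

End OrthogonalShattering.

Section WloaSums.
Variables (R : realType) (n T : nat).

Lemma sum_wloa_index (F : 'I_T.+1 * {set sgraph n * 'I_n} * 'I_n -> R) :
  \sum_(i : wloa_index n T) F (val i)
  = \sum_(x : 'I_T.+1 * {set sgraph n * 'I_n} * 'I_n | x.1.2 \in Sigma n x.1.1) F x.
Proof.
have := big_sub_cond
  [pred x : 'I_T.+1 * {set sgraph n * 'I_n} * 'I_n | x.1.2 \in Sigma n x.1.1] xpredT F.
move=> /(_ 0 +%R); rewrite big_mkcondr /= => <-.
by apply: eq_bigl => x; rewrite inE.
Qed.

Lemma sum_colour_indicator (col : 'I_T.+1 -> {set sgraph n * 'I_n}) (P : pred 'I_T.+1) :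
  (forall t, col t \in Sigma n t) ->
  \sum_(i : wloa_index n T)
     (if P (val i).1.1 && ((val i).1.2 == col (val i).1.1) then 1 else 0 : R)
  = (#|P| * n)%:R.
Proof.
move=> col_Sigma.
rewrite (sum_wloa_index (fun x => if P x.1.1 && (x.1.2 == col x.1.1) then 1 else 0)).
rewrite big_mkcond /= (eq_bigr (fun x => if P x.1.1 && (x.1.2 == col x.1.1) then 1 else 0)).
  rewrite -(pair_bigA _ (fun p k => if P p.1 && (p.2 == col p.1) then 1 else 0)) /=.
  rewrite -(pair_bigA _ (fun t c => \sum_(k : 'I_n) if P t && (c == col t) then 1 else 0)) /=.
  rewrite (eq_bigr (fun t => if P t then n%:R else 0)).
    by rewrite -(big_mkcond P (fun=> n%:R)) sumr_const -mulrnA mulnC.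
  move=> t _; rewrite (bigD1 (col t)) //= eqxx andbT [X in _ + X]big1; last first.
    by move=> c /negPf ->; rewrite andbF big1.
  case: (P t); rewrite addr0; first by rewrite sumr_const card_ord.
  exact: big1_eq.
move=> x _; case: ifP => //; case: ifP => // /andP[_ /eqP ->].
by rewrite col_Sigma.
Qed.

End WloaSums.

Lemma card_ord_neq0 T : #|[pred t : 'I_T.+1 | nat_of_ord t != 0%N]| = T.
Proof.
rewrite -[T]/(T.+1.-1) -[in RHS](card_ord T.+1) -(cardC1 ord0).
by apply: eq_card => t; rewrite !inE.
Qed.

Section CirculantFeatures.
Variables (R : realType) (n T : nat).

Lemma phi_wloa_circG a i : @phi_wloa R n.+1 T (circG n a) i
  = if (val i).1.2 == circ_colour n a (val i).1.1 then 1 else 0.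
Proof.
rewrite /phi_wloa; case: i => [[[t c] k] _] /=; rewrite wlcount_circG.
by case: eqP => _; rewrite ?ltn_ord.
Qed.

Definition round0_ind (i : wloa_index n.+1 T) : R :=
  if nat_of_ord (val i).1.1 == 0%N then 1 else 0.

Definition circ_ind (a : nat) (i : wloa_index n.+1 T) : R :=
  if (nat_of_ord (val i).1.1 != 0%N) && ((val i).1.2 == circ_colour n a (val i).1.1)
  then 1 else 0.

Lemma phi_wloa_circGE a i :
  @phi_wloa R n.+1 T (circG n a) i = round0_ind i + circ_ind a i.
Proof.
rewrite phi_wloa_circG /round0_ind /circ_ind; case: i => [[[t c] k] Sigma_c] /=.
have [t0|_] := eqVneq (nat_of_ord t) 0%N; last by rewrite add0r.
have Sc : c \in Sigma n.+1 0 by rewrite -t0.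
by rewrite t0 (Sigma0_circ_colour a Sc) eqxx /= addr0.
Qed.

Lemma dot_circ_ind_round0 a : dot (circ_ind a) round0_ind = 0.
Proof.
apply: big1 => i _; rewrite /circ_ind /round0_ind.
by case: eqP => _ /=; rewrite ?mulr0 ?andbF ?mul0r.
Qed.

Lemma dot_circ_ind_diag a : dot (circ_ind a) (circ_ind a) = (T * n.+1)%:R.
Proof.
rewrite /dot (eq_bigr (circ_ind a)); last first.
  by move=> i _; rewrite /circ_ind; case: ifP; rewrite ?mulr1 ?mulr0.
have := @sum_colour_indicator R n.+1 T (circ_colour n a)
  [pred t : 'I_T.+1 | nat_of_ord t != 0%N] (circ_colour_Sigma n a).
by rewrite card_ord_neq0.
Qed.

Lemma dot_circ_ind_neq a b : a != b -> (a + b < n.+1)%N ->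
  dot (circ_ind a) (circ_ind b) = 0.
Proof.
move=> neq_ab ab_lt; apply: big1 => i _; rewrite /circ_ind.
case: ifP => [/andP[t_neq0 /eqP ->]|]; last by rewrite mul0r.
have t_gt0 : (0 < (val i).1.1)%N by rewrite lt0n.
by rewrite (negPf (circ_colour_neq neq_ab ab_lt t_gt0)) andbF mul1r.
Qed.

Lemma sqnorm_phi_wloa_circG a :
  sqnorm (@phi_wloa R n.+1 T (circG n a)) = (T.+1 * n.+1)%:R.
Proof.
have := @sum_colour_indicator R n.+1 T (circ_colour n a) xpredT (circ_colour_Sigma n a).
rewrite card_ord => <-.
by apply: eq_bigr => i _; rewrite phi_wloa_circG; case: ifP; rewrite ?expr1n ?expr0n.
Qed.

Lemma enorm_phi_wloa_circG a :
  enorm (@phi_wloa R n.+1 T (circG n a)) = Num.sqrt (T.+1 * n.+1)%:R.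
Proof. by rewrite /enorm sqnorm_phi_wloa_circG. Qed.

End CirculantFeatures.

Section CirculantShattering.
Variables (R : realType) (n T : nat) (E : (Gn n.+1 -> wloa_index n.+1 T -> R) -> Prop).
Variables (emb : Gn n.+1 -> wloa_index n.+1 T -> R) (k r lam : R).
Hypothesis T_gt0 : (0 < T)%N.
Hypothesis E_emb : E emb.
Hypothesis k_gt0 : 0 < k.
Hypothesis emb_circG : forall a i, emb (circG n a) i = k * @phi_wloa R n.+1 T (circG n a) i.
Hypothesis enorm_emb_circG : forall a, enorm (emb (circG n a)) <= r.

Lemma circulant_VCdim_ge (M : nat) : (0 < M)%N -> (M.*2 <= n.+1)%N ->
  M%:R * lam ^+ 2 <= k ^+ 2 * (T * n.+1)%:R -> (M <= VCdim (Hclass E r lam))%N.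
Proof.
move=> M_gt0 M2_le margin.
have ab_lt (a b : 'I_M) : (a + b < n.+1)%N by have := ltn_ord a; have := ltn_ord b; lia.
have G_inj : injective (fun a : 'I_M => circG n a).
  by move=> a b /(circG_inj (ab_lt a b)) /val_inj.
have embG (a : 'I_M) (i : wloa_index n.+1 T) :
    emb (circG n a) i = k * round0_ind R i + k * circ_ind R a i.
  by rewrite emb_circG phi_wloa_circGE mulrDr.
have dot_e (a b : 'I_M) :
    dot (fun i : wloa_index n.+1 T => k * circ_ind R a i) (fun i => k * circ_ind R b i)
    = if a == b then k ^+ 2 * (T * n.+1)%:R else 0.
  rewrite dotZl dotZr mulrA -expr2.
  have [<-|neq_ab] := eqVneq a b; first by rewrite dot_circ_ind_diag.
  by rewrite dot_circ_ind_neq ?mulr0 ?ab_lt.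
have dot_e_s (a : 'I_M) :
    dot (fun i : wloa_index n.+1 T => k * circ_ind R a i) (fun i => k * round0_ind R i) = 0.
  by rewrite dotZl dotZr dot_circ_ind_round0 !mulr0.
have N_gt0 : 0 < k ^+ 2 * (T * n.+1)%:R.
  by rewrite mulr_gt0 ?exprn_gt0 // ltr0n muln_gt0 T_gt0.
exact: (orthogonal_VCdim_ge E_emb G_inj embG dot_e dot_e_s
  (fun a : 'I_M => enorm_emb_circG a) M_gt0 N_gt0 margin).
Qed.

Lemma circulant_VCdim_ge_quarter (q : R) : 4 <= q -> q <= n.+1%:R ->
  q * lam ^+ 2 <= 2 * (k ^+ 2 * (T * n.+1)%:R) -> q / 4 <= (VCdim (Hclass E r lam))%:R.
Proof.
move=> q_ge4 q_le_n margin.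
have M_le : (Num.truncn (q / 2))%:R <= q / 2 by rewrite truncn_le; lra.
have M_gt : q / 2 < (Num.truncn (q / 2))%:R + 1 by rewrite natr1 truncnS_gt.
set M := Num.truncn (q / 2) in M_le M_gt.
have M_gt0 : (0 < M)%N by rewrite -(ltr0n R); lra.
have M2_le : (M.*2 <= n.+1)%N by rewrite -(ler_nat R) -muln2 natrM; lra.
have M_margin : M%:R * lam ^+ 2 <= k ^+ 2 * (T * n.+1)%:R.
  have : M%:R * lam ^+ 2 <= q / 2 * lam ^+ 2 by rewrite ler_wpM2r ?sqr_ge0.
  lra.
have := circulant_VCdim_ge M_gt0 M2_le M_margin; rewrite -(ler_nat R).
lra.
Qed.

End CirculantShattering.

Lemma WLOA_VCdim_bounds (R : realType) (T n : nat) (lam : R) :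
  (0 < T)%N -> (0 < n)%N -> 0 < lam ->
  let r := Num.sqrt ((T + 1)%:R * n%:R) in
  r ^+ 2 / lam ^+ 2 <= n%:R -> 4 <= r ^+ 2 / lam ^+ 2 ->
  1 / 4 * (r ^+ 2 / lam ^+ 2) <= (VCdim (Hclass (@E_WLOA R n T) r lam))%:R
  /\ (VCdim (Hclass (@E_WLOA R n T) r lam))%:R <= 3 * (r ^+ 2 / lam ^+ 2).
Proof.
move=> T_gt0; case: n => [//|n] _ lam_gt0 r q_le_n q_ge4.
split; last first.
  have := VCdim_single_embedding_le (P := @phi_wloa R n.+1 T) (E := @E_WLOA R n.+1 T)
    r (fun _ e => e) lam_gt0.
  lra.
have E_phi : @E_WLOA R n.+1 T (@phi_wloa R n.+1 T) := erefl.
have phi_ball a : enorm (@phi_wloa R n.+1 T (circG n a)) <= r.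
  by rewrite enorm_phi_wloa_circG /r natrM addn1.
have margin : r ^+ 2 / lam ^+ 2 * lam ^+ 2 <= 2 * (1 ^+ 2 * (T * n.+1)%:R).
  rewrite divfK ?expf_neq0 ?gt_eqF // sqr_sqrtr ?mulr_ge0 // expr1n mul1r natrD natrM.
  have : (1 : R) <= T%:R by rewrite ler1n.
  have : (0 : R) <= n.+1%:R by [].
  nra.
have := circulant_VCdim_ge_quarter T_gt0 E_phi ltr01 (fun a i => esym (mul1r _)) phi_ball
  q_ge4 q_le_n margin.
lra.
Qed.

Lemma WLOA_normalized_VCdim_bounds (R : realType) (T n : nat) (lam : R) :
  (0 < T)%N -> (0 < n)%N -> 0 < lam ->
  let r := Num.sqrt (T%:R / (T + 1)%:R) in
  r ^+ 2 / lam ^+ 2 <= n%:R -> 8 <= 1 / lam ^+ 2 ->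
  1 / 8 * (1 / lam ^+ 2) <= (VCdim (Hclass (@Ebar_WLOA R n T) 1 lam))%:R
  /\ (VCdim (Hclass (@Ebar_WLOA R n T) 1 lam))%:R <= 3 * (1 / lam ^+ 2).
Proof.
move=> T_gt0; case: n => [//|n] _ lam_gt0 r q_le_n Q_ge8.
split; last first.
  have := VCdim_single_embedding_le (P := @phi_wloa_norm R n.+1 T)
    (E := @Ebar_WLOA R n.+1 T) 1 (fun _ e => e) lam_gt0.
  rewrite expr1n; lra.
have T_ge1 : (1 : R) <= T%:R by rewrite ler1n.
have T1_neq0 : (T%:R + 1 : R) != 0 by rewrite natr1 pnatr_eq0.
have n1_neq0 : (n%:R + 1 : R) != 0 by rewrite natr1 pnatr_eq0.
have r2 : r ^+ 2 = T%:R / (T%:R + 1) by rewrite sqr_sqrtr ?divr_ge0 ?ler0n // natrD.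
have r2_ge : 1 / 2 <= r ^+ 2 by rewrite r2 ler_pdivlMr; lra.
pose nu : R := Num.sqrt (T.+1 * n.+1)%:R.
have nu_gt0 : 0 < nu by rewrite sqrtr_gt0 ltr0n muln_gt0.
have E_phi : @Ebar_WLOA R n.+1 T (@phi_wloa_norm R n.+1 T) := erefl.
have k_gt0 : 0 < nu^-1 by rewrite invr_gt0.
have emb_circG a i :
    @phi_wloa_norm R n.+1 T (circG n a) i = nu^-1 * @phi_wloa R n.+1 T (circG n a) i.
  by rewrite /phi_wloa_norm enorm_phi_wloa_circG mulrC.
have ball a : enorm (@phi_wloa_norm R n.+1 T (circG n a)) <= 1.
  by rewrite /phi_wloa_norm enorm_normalize // enorm_phi_wloa_circG gt_eqF.
have nu2 : nu ^+ 2 = (T%:R + 1) * (n%:R + 1) by rewrite sqr_sqrtr // natrM -!natr1.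
have margin : r ^+ 2 / lam ^+ 2 * lam ^+ 2 <= 2 * (nu^-1 ^+ 2 * (T * n.+1)%:R).
  have -> : nu^-1 ^+ 2 * (T * n.+1)%:R = r ^+ 2.
    rewrite exprVn nu2 r2 natrM -natr1; field.
    by rewrite ?T1_neq0 ?n1_neq0 ?mulf_neq0.
  rewrite divfK ?expf_neq0 ?gt_eqF //; lra.
have qE : r ^+ 2 / lam ^+ 2 = r ^+ 2 * (1 / lam ^+ 2) by rewrite mul1r.
have q_ge4 : 4 <= r ^+ 2 / lam ^+ 2 by rewrite qE; nra.
have := circulant_VCdim_ge_quarter T_gt0 E_phi k_gt0 emb_circG ball
  q_ge4 q_le_n margin.
rewrite qE; nra.
Qed.

Theorem proposition6 (R : realType) :
  (exists c1 c2 K : R, 0 < c1 /\ 0 < c2 /\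
     forall (T n : nat) (lam : R), (0 < T)%N -> (0 < n)%N -> 0 < lam ->
       let r := Num.sqrt ((T + 1)%:R * n%:R) in
       r ^+ 2 / lam ^+ 2 <= n%:R -> K <= r ^+ 2 / lam ^+ 2 ->
       c1 * (r ^+ 2 / lam ^+ 2) <= (VCdim (Hclass (@E_WLOA R n T) r lam))%:R
       /\ (VCdim (Hclass (@E_WLOA R n T) r lam))%:R <= c2 * (r ^+ 2 / lam ^+ 2))
  /\
  (exists c1 c2 K : R, 0 < c1 /\ 0 < c2 /\
     forall (T n : nat) (lam : R), (0 < T)%N -> (0 < n)%N -> 0 < lam ->
       let r := Num.sqrt (T%:R / (T + 1)%:R) in
       r ^+ 2 / lam ^+ 2 <= n%:R -> K <= 1 / lam ^+ 2 ->
       c1 * (1 / lam ^+ 2) <= (VCdim (Hclass (@Ebar_WLOA R n T) 1 lam))%:R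
       /\ (VCdim (Hclass (@Ebar_WLOA R n T) 1 lam))%:R <= c2 * (1 / lam ^+ 2)).
Proof.
split.
- exists (1 / 4), 3, 4; split; first lra; split; first lra.
  by move=> T n lam T_gt0 n_gt0 lam_gt0; apply: WLOA_VCdim_bounds.
- exists (1 / 8), 3, 8; split; first lra; split; first lra.
  by move=> T n lam T_gt0 n_gt0 lam_gt0; apply: WLOA_normalized_VCdim_bounds.
Qed.
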